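(* Let $p$ be a prime, $k \geq 1$, $G_1, \dots, G_k$ finite-dimensional vector spaces over $\mathbb{F}_p$, and $f \colon G_1 \times \cdots \times G_k \to \mathbb{D}$. Let $c, \varepsilon > 0$ and suppose $\alpha, \alpha'$ are multilinear forms on $G_1 \times \cdots \times G_k$ such that $\operatorname{bias}(\alpha - \alpha') \geq c$ and $\alpha \in \operatorname{Spec}^{\mathrm{ml}}_{\varepsilon}(f)$. Then $\alpha' \in \operatorname{Spec}^{\mathrm{ml}}_{\varepsilon'}(f)$ for $\varepsilon' = \varepsilon\, p^{-O((\log_p c^{-1})^{O(1)})}$.
   Context: $\mathbb{D} = \{z \in \mathbb{C} : |z| \leq 1\}$, $\omega = e^{2\pi i/p}$, $\mathbb{E}$ is the uniform average. For a multilinear form $\beta$ on $G_1 \times \cdots \times G_k$, $\operatorname{bias}\beta = \mathbb{E}_{x_1 \in G_1, \dots, x_k \in G_k}\omega^{\beta(x_1, \dots, x_k)}$. The box norm of $g \colon G_1 \times \cdots \times G_k \to \mathbb{C}$ is given by $\|g\|_{\square^k}^{2^k} = \mathbb{E}_{x_1, y_1 \in G_1, \dots, x_k, y_k \in G_k} \prod_{I \subseteq [k]} \operatorname{Conj}^{|I|} g(x_I, y_{[k]\setminus I})$, where $(x_I, y_{[k]\setminus I})$ has $i$-th coordinate $x_i$ if $i \in I$ and $y_i$ otherwise, and $\operatorname{Conj}^j$ is complex conjugation applied $j$ times. The $\varepsilon$-large multilinear spectrum is $\operatorname{Spec}^{\mathrm{ml}}_{\varepsilon}(f) = \{\mu \text{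 multilinear form } G_1 \times \cdots \times G_k \to \mathbb{F}_p : \|f\omega^{\mu}\|_{\square^k} \geq \varepsilon\}$. The $O(\cdot)$ constants are absolute (may depend on $k$ only through the implicit constants as in the paper). *)

From mathcomp Require Import all_boot all_order all_algebra.
From mathcomp Require Import complex.
From mathcomp Require Import all_classical all_reals all_analysis.
Set Implicit Arguments. Unset Strict Implicit. Unset Printing Implicit Defensive.
Import Order.TTheory GRing.Theory Num.Theory.
Local Open Scope ring_scope.
Local Open Scope complex_scope.

Section Defs.
Variable R : realType.

Definition pt (p k : nat) (n : 'I_k -> nat) : finType :=
  {dffun forall i : 'I_k, 'rV['F_p]_(n i)}.

Definition avg (T : finType) (F : T -> R[i]) : R[i] :=
  (#|T|%:R)^-1 * \sum_(t : T) F t.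

Definition upd p k (n : 'I_k -> nat) (x : pt p n) (i : 'I_k) (v : 'rV['F_p]_(n i))
  : pt p n := [ffun j => @dfwith _ (fun j : 'I_k => 'rV['F_p]_(n j)) (fun j => x j) i v j].

Definition multilinear p k (n : 'I_k -> nat) (mu : pt p n -> 'F_p) : Prop :=
  forall (i : 'I_k) (x : pt p n) (a : 'F_p) (u v : 'rV['F_p]_(n i)),
    mu (upd x (a *: u + v)) = a * mu (upd x u) + mu (upd x v).

Definition omega (p : nat) : R[i] :=
  (cos (2 * pi / p%:R)) +i* (sin (2 * pi / p%:R)).

(* omega^mu for an F_p-valued function; F_p elements are residues 0..p-1 *)
Definition omega_pow {p : nat} (a : 'F_p) : R[i] := omega p ^+ (nat_of_ord a).

Definition bias p k (n : 'I_k -> nat) (beta : pt p n -> 'F_p) : R[i] :=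
  avg (fun x : pt p n => omega_pow (beta x)).

Definition mix p k (n : 'I_k -> nat) (I : {set 'I_k}) (x y : pt p n) : pt p n :=
  [ffun i => if i \in I then x i else y i].

Definition box_pow p k (n : 'I_k -> nat) (g : pt p n -> R[i]) : R[i] :=
  avg (fun xy : pt p n * pt p n =>
         \prod_(I : {set 'I_k}) iter #|I| (@conjc R) (g (mix I xy.1 xy.2))).

(* ||g||_{box^k}, the (2^k)-th root of the (real, nonnegative) quantity above *)
Definition box_norm p k (n : 'I_k -> nat) (g : pt p n -> R[i]) : R :=
  powR (complex.Re (box_pow g)) (2 ^- k).

Definition spec_ml p k (n : 'I_k -> nat) (eps : R) (f : pt p n -> R[i])
  (mu : pt p n -> 'F_p) : Prop :=
  multilinear mu /\ eps <= box_norm (fun x => f x * omega_pow (mu x)).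

End Defs.

Arguments bias {R p k n} beta.
Arguments omega {R} p.

From mathcomp Require Import all_boot all_order all_algebra.
From mathcomp Require Import complex.
From mathcomp Require Import all_classical all_reals all_analysis.
From mathcomp Require Import ring.

(** Twisting by a multilinear phase can lower the box norm only by the bias factor:
    for multilinear [gamma], [||g omega^gamma||^(2^k) >= bias gamma * ||g||^(2^k)].
    With [g = f omega^alpha] and [gamma = alpha' - alpha], whose bias is the (real)
    bias of [alpha - alpha'] and hence at least [c], this gives [eps' = eps c], i.e. the
    theorem with [C1 = C2 = 1].

    The inequality is proved for partial box norms, in which the coordinates outside
    a set [S] are frozen, by induction on [|S|]. For [j] in [S] the partial box norm is
    an average of [|E_a Q(a)|^2] over the other coordinates, and the twist replaces
    [Q] by [Q chi] with [chi] a character of [G_j] (multilinearity of [gamma] in the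
    [j]-th variable). As [E chi] is [1] or [0], [|E_a Q chi|^2 >= E chi |E_a Q|^2], and
    averaging [E chi |E_a Q|^2] over the frozen value of the [j]-th coordinate gives a
    partial box norm on [S \ {j}] of [w |-> g(w[j:=a]) conj g(w[j:=b]) omega^gamma(w)],
    to which the induction hypothesis applies. *)

Set Implicit Arguments. Unset Strict Implicit. Unset Printing Implicit Defensive.
Import Order.TTheory GRing.Theory Num.Theory.
Local Open Scope ring_scope.
Local Open Scope complex_scope.

Section Omega.
Variables (R : realType) (p : nat).
Hypothesis p_prime : prime p.

Let theta : R := 2 * pi / p%:R.

Lemma omega_exp m : omega p ^+ m = cos (m%:R * theta) +i* sin (m%:R * theta) :> R[i].
Proof.
elim: m => [|m IHm]; first by rewrite expr0 !mul0r cos0 sin0.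
rewrite exprS IHm -[m.+1]add1n natrD mulrDl mul1r cosD sinD.
by apply/eqP; rewrite eq_complex /=; apply/andP; split; apply/eqP; ring.
Qed.

Lemma omega_exp_p : omega p ^+ p = 1 :> R[i].
Proof.
have p_neq0 : (p%:R : R) != 0 by rewrite pnatr_eq0 -lt0n prime_gt0.
by rewrite omega_exp /theta mulrCA divff // mulr1 mulr_natl cos2pi sin2pi.
Qed.

Lemma omega_mulJ : omega p * (omega p)^*%C = 1 :> R[i].
Proof.
rewrite /omega -/theta; apply/eqP; rewrite eq_complex /=; apply/andP; split; apply/eqP.
  by rewrite -(cos2Dsin2 theta); ring.
by rewrite mulrN mulrC addrC subrr.
Qed.

Local Notation om := (@omega_pow R p).

Lemma omega_powD (a b : 'F_p) : om (a + b) = om a * om b.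
Proof.
rewrite /omega_pow -exprD.
have -> : nat_of_ord (a + b) = ((a + b) %% p)%N.
  by rewrite /=; set m := addn _ _; clearbody m; rewrite (Fp_cast p_prime).
by rewrite {2}(divn_eq (a + b) p) exprD mulnC exprM omega_exp_p expr1n mul1r.
Qed.

Lemma omega_pow0 : om 0 = 1.
Proof. exact: expr0. Qed.

Lemma omega_pow_mulJ (a : 'F_p) : om a * (om a)^*%C = 1.
Proof. by rewrite /omega_pow rmorphXn -exprMn omega_mulJ expr1n. Qed.

Lemma omega_powN (a : 'F_p) : om (- a) = (om a)^*%C.
Proof.
by rewrite -[om (- a)]mulr1 -(omega_pow_mulJ a) mulrA -omega_powD addNr omega_pow0 mul1r.
Qed.

Lemma norm_omega_pow (a : 'F_p) : `|om a| = 1.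
Proof. by apply/eqP; rewrite -sqrp_eq1 // sqr_normc omega_pow_mulJ. Qed.

End Omega.

Lemma prod_subset_setD1 (M : comPzSemiRingType) (T : finType) (S : {set T}) j (F : {set T} -> M) :
  j \in S ->
  \prod_(I : {set T} | I \subset S) F I = \prod_(J : {set T} | J \subset S :\ j) (F J * F (j |: J)).
Proof.
move=> jS; rewrite (bigID (fun I : {set T} => j \in I)) /= mulrC big_split /=.
congr (_ * _); first by apply: eq_bigl => I; rewrite finset.subsetD1.
rewrite (reindex_onto (fun J => j |: J) (fun I => I :\ j)) /=; last first.
  by move=> I /andP[_ jI]; rewrite finset.setD1K.
apply: eq_bigl => J; apply/idP/idP.
  by case/andP => [/andP[sI _] /eqP <-]; rewrite finset.setSD.
case/finset.subsetD1P => sJ jNJ.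
by rewrite finset.subUset finset.sub1set jS sJ finset.setU11 finset.setU1K // eqxx.
Qed.

Section Average.
Variable R : realType.
Local Notation C := R[i].
Implicit Types (T A B : finType).

Lemma eq_avg T (F G : T -> C) : F =1 G -> avg F = avg G.
Proof. by move=> eqFG; rewrite /avg (eq_bigr _ (fun t _ => eqFG t)). Qed.

Lemma avg_cst T (t0 : T) (c : C) : avg (fun _ : T => c) = c.
Proof.
have T_neq0 : (#|T|%:R : C) != 0 by rewrite pnatr_eq0 -lt0n; apply/card_gt0P; exists t0.
by rewrite /avg sumr_const -[c *+ _]mulr_natl mulrA mulVf ?mul1r.
Qed.

Lemma avgB T (F G : T -> C) : avg (fun t => F t - G t) = avg F - avg G.
Proof. by rewrite /avg sumrB mulrBr. Qed.

Lemma avgMl T (c : C) (F : T -> C) : avg (fun t => c * F t) = c * avg F.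
Proof. by rewrite /avg -mulr_sumr mulrCA. Qed.

Lemma avgMr T (c : C) (F : T -> C) : avg (fun t => F t * c) = avg F * c.
Proof. by rewrite /avg -mulr_suml mulrA. Qed.

Lemma avg_ge0 T (F : T -> C) : (forall t, 0 <= F t) -> 0 <= avg F.
Proof. by move=> F_ge0; rewrite mulr_ge0 ?invr_ge0 ?ler0n ?sumr_ge0. Qed.

Lemma ler_avg T (F G : T -> C) : (forall t, F t <= G t) -> avg F <= avg G.
Proof. by move=> leFG; rewrite -subr_ge0 -avgB avg_ge0 // => t; rewrite subr_ge0. Qed.

Lemma norm_avg_le1 T (F : T -> C) : (forall t, `|F t| <= 1) -> `|avg F| <= 1.
Proof.
move=> F_le1; rewrite /avg normrM ger0_norm ?invr_ge0 ?ler0n //.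
have [->|T_neq0] := eqVneq (#|T|%:R : C) 0; first by rewrite invr0 mul0r.
rewrite -[leRHS](mulVf T_neq0) ler_wpM2l ?invr_ge0 ?ler0n //.
apply: le_trans (ler_norm_sum _ _ _) _.
by apply: le_trans (ler_sum _ (fun t _ => F_le1 t)) _; rewrite sumr_const.
Qed.

Lemma conj_avg T (F : T -> C) : (avg F)^*%C = avg (fun t => (F t)^*%C).
Proof. by rewrite /avg rmorphM rmorph_sum /= conjc_inv conjc_nat. Qed.

Lemma reindex_avg T (h : T -> T) (F : T -> C) :
  bijective h -> avg (fun t => F (h t)) = avg F.
Proof. by move=> /bij_inj h_inj; rewrite /avg [in RHS](reindex_inj h_inj). Qed.

Lemma avg_pair A B (F : A * B -> C) :
  avg F = avg (fun a => avg (fun b => F (a, b))).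
Proof.
rewrite /avg card_prod natrM invfM -mulrA -mulr_sumr pair_bigA /=.
by congr (_ * (_ * _)); apply: eq_bigr => -[a b].
Qed.

Lemma exchange_avg A B (F : A -> B -> C) :
  avg (fun a => avg (fun b => F a b)) = avg (fun b => avg (fun a => F a b)).
Proof.
rewrite /avg !mulr_sumr.
transitivity (\sum_a \sum_b ((#|A|%:R : C)^-1 * (#|B|%:R)^-1 * F a b)).
  by apply: eq_bigr => a _; rewrite mulrA mulr_sumr.
rewrite exchange_big /=; apply: eq_bigr => b _.
by rewrite mulrA (mulrC (#|B|%:R)^-1) mulr_sumr.
Qed.

Lemma avg_mul A B (F : A -> C) (G : B -> C) :
  avg (fun ab : A * B => F ab.1 * G ab.2) = avg F * avg G.
Proof.
rewrite avg_pair /= -avgMr; apply: eq_avg => a /=.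
by rewrite -avgMl.
Qed.

End Average.

Section Characters.
Variables (R : realType) (V : finZmodType).
Local Notation C := R[i].
Variable ch : V -> C.
Hypothesis chD : {morph ch : a b / a + b >-> a * b}.

Lemma avg_character : (forall a, ch a = 1) \/ avg ch = 0.
Proof.
have [/forallP ch1|/forallPn[a0 cha0_neq1]] := boolP [forall a, ch a == 1].
  by left=> a; apply/eqP.
right; have shift_bij : bijective (fun a : V => a + a0).
  by exists (fun a => a - a0) => a; rewrite ?addrK ?subrK.
have avg_chM : avg ch * (1 - ch a0) = 0.
  rewrite mulrBr mulr1 -avgMr -(reindex_avg ch shift_bij).
  by rewrite (eq_avg (fun a => chD a a0)) subrr.
by move/eqP: avg_chM; rewrite mulf_eq0 subr_eq0 [1 == _]eq_sym (negbTE cha0_neq1) orbF => /eqP.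
Qed.

Lemma ler_avg_character_twist (Q : V -> C) :
  avg ch * (avg Q * (avg Q)^*%C) <=
  avg (fun a => Q a * ch a) * (avg (fun a => Q a * ch a))^*%C.
Proof.
have [ch1|->] := avg_character; last by rewrite mul0r mulcJ_ge0.
rewrite (eq_avg ch1) (avg_cst 0) mul1r.
suff -> : (fun a => Q a * ch a) = Q by [].
by apply/funext => a; rewrite ch1 mulr1.
Qed.

End Characters.

Section BoxNorms.
Variables (R : realType) (p k : nat) (n : 'I_k -> nat).
Hypothesis p_prime : prime p.
Local Notation T := (pt p n).
Local Notation C := R[i].
Local Notation V j := 'rV['F_p]_(n j).
Local Notation om := (@omega_pow R p).
Implicit Types (S I : {set 'I_k}) (x y z w : T) (g h : T -> C) (gamma : T -> 'F_p).

Lemma iter_conjcM m (a b : C) : iter m conjc (a * b) = iter m conjc a * iter m conjc b.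
Proof. by elim: m => //= m ->; rewrite rmorphM. Qed.

Lemma iter_conjcJ m (a : C) : iter m conjc a^*%C = (iter m conjc a)^*%C.
Proof. by elim: m => //= m ->. Qed.

Lemma upd_eq x j (v : V j) : upd x v j = v.
Proof. by rewrite ffunE dfwithin. Qed.

Lemma upd_neq x j (v : V j) i : j != i -> upd x v i = x i.
Proof. by move=> neq_ji; rewrite ffunE dfwithout. Qed.

Lemma upd_upd x j (u v : V j) : upd (upd x u) v = upd x v.
Proof.
apply/ffunP => i; have [<-|neq_ji] := eqVneq j i; first by rewrite !upd_eq.
by rewrite !upd_neq.
Qed.

Lemma upd_id x j : upd x (x j) = x.
Proof.
apply/ffunP => i; have [<-|neq_ji] := eqVneq j i; first by rewrite upd_eq.
by rewrite upd_neq.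
Qed.

Lemma avg_upd j (F : T -> C) :
  avg F = avg (fun x => avg (fun v : V j => F (upd x v))).
Proof.
pose split_at (xv : T * V j) := (upd xv.1 xv.2, xv.1 j).
have split_bij : bijective split_at.
  by exists split_at => -[x v]; rewrite /split_at /= upd_eq upd_upd upd_id.
rewrite -[RHS](avg_pair (fun xv : T * V j => F (upd xv.1 xv.2))).
rewrite -(reindex_avg (fun xv : T * V j => F (upd xv.1 xv.2)) split_bij) avg_pair.
by apply: eq_avg => x /=; under eq_avg do rewrite upd_upd upd_id; rewrite (avg_cst 0).
Qed.

Lemma avg_upd2 j (F : T -> T -> C) :
  avg (fun xy : T * T => F xy.1 xy.2) =
  avg (fun xy : T * T => avg (fun ab : V j * V j => F (upd xy.1 ab.1) (upd xy.2 ab.2))).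
Proof.
rewrite !(avg_pair (A := T) (B := T)) [LHS](avg_upd j); apply: eq_avg => x /=.
under [RHS]eq_avg do rewrite avg_pair.
rewrite [RHS]exchange_avg; apply: eq_avg => a /=.
by rewrite [LHS](avg_upd j).
Qed.

Definition glue S x z : T := [ffun i => if i \in S then x i else z i].

Lemma glueE S x z i : glue S x z i = if i \in S then x i else z i.
Proof. exact: ffunE. Qed.

Lemma glue_setT x z : glue [set: 'I_k] x z = x.
Proof. by apply/ffunP => i; rewrite glueE finset.in_setT. Qed.

Lemma glue_set0 x z : glue finset.set0 x z = z.
Proof. by apply/ffunP => i; rewrite glueE finset.in_set0. Qed.

Lemma glue_upd_in S j x z (v : V j) :
  j \in S -> glue S (upd x v) z = glue (S :\ j) x (upd z v).
Proof.
move=> jS; apply/ffunP => i; rewrite !glueE finset.in_setD1.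
have [->|neq_ij] := eqVneq i j; first by rewrite jS !upd_eq.
by rewrite !upd_neq // eq_sym.
Qed.

Lemma glue_upd_out S j x z (v : V j) :
  j \notin S -> glue S x (upd z v) = upd (glue S x z) v.
Proof.
move=> jNS; apply/ffunP => i; have [<-|neq_ji] := eqVneq j i.
  by rewrite glueE (negbTE jNS) !upd_eq.
by rewrite glueE !upd_neq // glueE.
Qed.

Lemma glue_mix_upd S I j x y z (a b : V j) :
  j \notin S -> glue S (mix I (upd x a) (upd y b)) z = glue S (mix I x y) z.
Proof.
move=> jNS; apply/ffunP => i; rewrite !glueE. (* [glueE] also unfolds [mix] *)
case: ifP => // iS; have neq_ji : j != i by apply: contraNneq jNS => ->.
by rewrite !upd_neq.
Qed.

Definition box_term S z g x y : C :=
  \prod_(I : {set 'I_k} | I \subset S) iter #|I| conjc (g (glue S (mix I x y) z)).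

Definition box_pow_on S z g : C := avg (fun xy : T * T => box_term S z g xy.1 xy.2).

Definition bias_on S z gamma : C := avg (fun x => om (gamma (glue S x z))).

Lemma box_pow_on_setT z g : box_pow_on [set: 'I_k] z g = box_pow g.
Proof.
apply: eq_avg => -[x y]; rewrite /box_term (eq_bigl xpredT) => [|I]; last exact: finset.subsetT.
by apply: eq_bigr => I _; rewrite glue_setT.
Qed.

Lemma bias_on_setT z gamma : bias_on [set: 'I_k] z gamma = bias gamma.
Proof. by apply: eq_avg => x; rewrite glue_setT. Qed.

Lemma box_pow_on_set0 z g : box_pow_on finset.set0 z g = g z.
Proof.
rewrite -[RHS](avg_cst (z, z)); apply: eq_avg => -[x y].
rewrite /box_term (eq_bigl (pred1 finset.set0)) => [|I]; last exact: finset.subset0.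
by rewrite big_pred1_eq finset.cards0 glue_set0.
Qed.

Lemma bias_on_set0 z gamma : bias_on finset.set0 z gamma = om (gamma z).
Proof. by rewrite -[RHS](avg_cst z); apply: eq_avg => x; rewrite glue_set0. Qed.

Lemma box_termM S z g h x y :
  box_term S z (fun w => g w * h w) x y = box_term S z g x y * box_term S z h x y.
Proof. by rewrite -big_split; apply: eq_bigr => I _; rewrite iter_conjcM. Qed.

Lemma box_term_upd S j z g x y (a b : V j) :
  j \notin S -> box_term S z g (upd x a) (upd y b) = box_term S z g x y.
Proof. by move=> jNS; apply: eq_bigr => I _; rewrite glue_mix_upd. Qed.

Lemma mix_setU1 I j x y : mix (j |: I) x y = upd (mix I x y) (x j).
Proof.
apply/ffunP => i; have [<-|neq_ji] := eqVneq j i.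
  by rewrite upd_eq ffunE finset.setU11.
by rewrite upd_neq // !ffunE finset.in_setU1 eq_sym (negbTE neq_ji).
Qed.

Lemma mix_notin I j x y : j \notin I -> upd (mix I x y) (y j) = mix I x y.
Proof.
move=> jNI; apply/ffunP => i; have [<-|neq_ji] := eqVneq j i.
  by rewrite upd_eq ffunE (negbTE jNI).
by rewrite upd_neq.
Qed.

Lemma box_term_setD1 S j z g x y : j \in S ->
  box_term S z g x y =
  box_term (S :\ j) (upd z (y j)) g x y * (box_term (S :\ j) (upd z (x j)) g x y)^*%C.
Proof.
move=> jS; rewrite /box_term (prod_subset_setD1 _ jS) rmorph_prod -big_split /=.
apply: eq_bigr => J /finset.subsetD1P[_ jNJ].
rewrite mix_setU1 -{1}(@mix_notin J j x y jNJ) !(glue_upd_in _ _ _ jS).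
by rewrite finset.cardsU1 jNJ iterS.
Qed.

Definition box_slice S j z g (xy : T * T) (a : V j) : C :=
  box_term (S :\ j) (upd z a) g xy.1 xy.2.
Arguments box_slice : clear implicits.

Lemma box_pow_on_setD1 S j z g : j \in S ->
  box_pow_on S z g =
  avg (fun xy => avg (box_slice S j z g xy) * (avg (box_slice S j z g xy))^*%C).
Proof.
move=> jS; have jNSj : j \notin S :\ j by rewrite finset.setD11.
rewrite /box_pow_on (avg_upd2 j); apply: eq_avg => -[x y] /=.
rewrite conj_avg mulrC -avg_mul; apply: eq_avg => -[a b] /=.
by rewrite (box_term_setD1 _ _ _ _ jS) !upd_eq !box_term_upd // mulrC.
Qed.

Definition mdiff j (a b : V j) g w : C := g (upd w a) * (g (upd w b))^*%C.

Lemma box_term_mdiff S j z g x y (u a b : V j) : j \notin S ->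
  box_term S (upd z u) (mdiff a b g) x y =
  box_term S (upd z a) g x y * (box_term S (upd z b) g x y)^*%C.
Proof.
move=> jNS; rewrite /box_term rmorph_prod -big_split; apply: eq_bigr => I _ /=.
by rewrite /mdiff !glue_upd_out // !upd_upd iter_conjcM iter_conjcJ.
Qed.

Lemma box_slice_omegaD S j z gamma xy : multilinear gamma ->
  {morph box_slice S j z (fun w => om (gamma w)) xy : a b / a + b >-> a * b}.
Proof.
move=> ml_gamma a b; have jNSj : j \notin S :\ j by rewrite finset.setD11.
rewrite /box_slice /box_term -big_split; apply: eq_bigr => I _ /=.
rewrite !glue_upd_out // -iter_conjcM -omega_powD //.
by have := ml_gamma j (glue (S :\ j) (mix I xy.1 xy.2) z) 1 a b; rewrite scale1r mul1r => ->.
Qed.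

Lemma box_pow_on_mdiff S j z g h (u a b : V j) : j \in S ->
  box_pow_on (S :\ j) (upd z u) (fun w => mdiff a b g w * h w) =
  avg (fun xy => box_slice S j z g xy a * (box_slice S j z g xy b)^*%C * box_slice S j z h xy u).
Proof.
move=> jS; have jNSj : j \notin S :\ j by rewrite finset.setD11.
by apply: eq_avg => xy; rewrite box_termM box_term_mdiff.
Qed.

Lemma bias_on_setD1 S j z gamma : j \in S ->
  avg (fun u : V j => bias_on (S :\ j) (upd z u) gamma) = bias_on S z gamma.
Proof.
move=> jS; rewrite /bias_on [RHS](avg_upd j) [RHS]exchange_avg.
by apply: eq_avg => u; apply: eq_avg => x; rewrite glue_upd_in.
Qed.

Lemma avg_box_pow_on_mdiff S j z g h : j \in S ->
  avg (fun uab : V j * (V j * V j) =>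
    box_pow_on (S :\ j) (upd z uab.1) (fun w => mdiff uab.2.1 uab.2.2 g w * h w)) =
  avg (fun xy => avg (box_slice S j z h xy) *
    (avg (box_slice S j z g xy) * (avg (box_slice S j z g xy))^*%C)).
Proof.
move=> jS; under eq_avg do rewrite box_pow_on_mdiff //.
rewrite exchange_avg; apply: eq_avg => xy.
rewrite conj_avg -!avg_mul; apply: eq_avg => -[u [a b]] /=.
by rewrite mulrC.
Qed.

Lemma avg_bias_box_pow_on_mdiff S j z g gamma : j \in S ->
  avg (fun uab : V j * (V j * V j) =>
    bias_on (S :\ j) (upd z uab.1) gamma * box_pow_on (S :\ j) (upd z uab.1) (mdiff uab.2.1 uab.2.2 g)) =
  bias_on S z gamma * box_pow_on S z g.
Proof.
move=> jS; have jNSj : j \notin S :\ j by rewrite finset.setD11.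
pose D (ab : V j * V j) :=
  avg (fun xy => box_slice S j z g xy ab.1 * (box_slice S j z g xy ab.2)^*%C).
transitivity (avg (fun uab : V j * (V j * V j) =>
    bias_on (S :\ j) (upd z uab.1) gamma * D uab.2)).
  apply: eq_avg => -[u [a b]]; congr (_ * _).
  by apply: eq_avg => xy; rewrite box_term_mdiff.
rewrite (avg_mul (fun u => bias_on (S :\ j) (upd z u) gamma) D) bias_on_setD1 //.
rewrite (box_pow_on_setD1 _ _ jS); congr (_ * _).
by rewrite exchange_avg; apply: eq_avg => xy; rewrite conj_avg -avg_mul.
Qed.

Lemma bias_box_pow_on_le S z g gamma : multilinear gamma ->
  bias_on S z gamma * box_pow_on S z g <= box_pow_on S z (fun w => g w * om (gamma w)).
Proof.
move=> ml_gamma; move: {2}#|S| (erefl #|S|) => m.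
elim: m S z g => [|m IHm] S z g card_S.
  by rewrite (finset.cards0_eq card_S) bias_on_set0 !box_pow_on_set0 mulrC.
have [j jS] : exists j, j \in S by apply/finset.set0Pn; rewrite -finset.card_gt0 card_S.
have card_Sj : #|S :\ j| = m by move: card_S; rewrite (finset.cardsD1 j) jS => -[].
rewrite -(avg_bias_box_pow_on_mdiff _ _ _ jS).
apply: le_trans (_ : avg (fun uab : V j * (V j * V j) => box_pow_on (S :\ j) (upd z uab.1)
    (fun w => mdiff uab.2.1 uab.2.2 g w * om (gamma w))) <= _).
  by apply: ler_avg => uab; apply: IHm.
rewrite avg_box_pow_on_mdiff // (box_pow_on_setD1 _ _ jS); apply: ler_avg => xy.
rewrite (eq_avg (fun a => box_termM _ _ _ _ _ _)).
exact: ler_avg_character_twist (@box_slice_omegaD S j z gamma xy ml_gamma) (box_slice S j z g xy).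
Qed.

Lemma bias_box_pow_le g gamma : multilinear gamma ->
  bias gamma * box_pow g <= box_pow (fun w => g w * om (gamma w)).
Proof.
pose z : T := [ffun => 0].
by rewrite -(bias_on_setT z) -!(box_pow_on_setT z); apply: bias_box_pow_on_le.
Qed.

Lemma box_pow_ge0 g : (0 < k)%N -> 0 <= box_pow g.
Proof.
move=> k_gt0; pose z : T := [ffun => 0].
rewrite -(box_pow_on_setT z) (box_pow_on_setD1 _ _ (finset.in_setT (Ordinal k_gt0))).
by apply: avg_ge0 => xy; apply: mulcJ_ge0.
Qed.

Lemma bias_subC gamma gamma' :
  bias (R := R) (fun x => gamma x - gamma' x) = (bias (fun x => gamma' x - gamma x))^*%C.
Proof. by rewrite conj_avg; apply: eq_avg => x; rewrite -(@omega_powN R p p_prime) opprB. Qed.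

Lemma norm_bias_le1 gamma : `|bias (R := R) gamma| <= 1.
Proof. by apply: norm_avg_le1 => x; rewrite norm_omega_pow. Qed.

Lemma multilinearB gamma gamma' : multilinear gamma -> multilinear gamma' ->
  multilinear (fun x => gamma x - gamma' x).
Proof.
by move=> ml_gamma ml_gamma' i x a u v; rewrite ml_gamma ml_gamma' mulrBr opprD addrACA.
Qed.

End BoxNorms.

Lemma powR_ln_ratio (R : realType) (P c : R) : 1 < P -> 0 < c ->
  P `^ (- (ln c^-1 / ln P)) = c.
Proof.
move=> P_gt1 c_gt0; have lnP_gt0 : 0 < ln P by apply: ln_gt0.
rewrite powRN /powR gt_eqF ?(lt_trans ltr01) // divfK ?gt_eqF //.
by rewrite lnK ?invrK // posrE invr_gt0.
Qed.

Lemma ler_Re_mul (R : rcfType) (b B X : R[i]) : 0 <= b -> 0 <= B -> b * B <= X ->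
  complex.Re b * complex.Re B <= complex.Re X.
Proof.
move=> b_ge0 B_ge0; rewrite -[b](RRe_real (ger0_real b_ge0)) -[B](RRe_real (ger0_real B_ge0)).
by rewrite -rmorphM lecE => /andP[].
Qed.

Lemma ler_powR_scale (R : realType) (r c B X eps : R) :
  0 <= r <= 1 -> 0 < c <= 1 -> 0 <= B -> eps <= B `^ r -> c * B <= X ->
  eps * c <= X `^ r.
Proof.
move=> /andP[r_ge0 r_le1] c01 B_ge0 eps_le cB_le; have /andP[c_gt0 _] := c01.
have cB_ge0 : 0 <= c * B := mulr_ge0 (ltW c_gt0) B_ge0.
apply: le_trans (ler_wpM2r (ltW c_gt0) eps_le) _.
apply: le_trans (ler_wpM2l (powR_ge0 _ _) (ger1_powR c01 r_le1)) _.
rewrite -powRM //; last exact: ltW.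
rewrite mulrC ge0_ler_powR ?nnegrE //; exact: le_trans cB_le.
Qed.

Theorem lemma31 (R : realType) (k : nat) (hk : (1 <= k)%N) :
  exists C1 C2 : R, 0 < C1 /\ 0 < C2 /\
  forall (p : nat) (hp : prime p) (n : 'I_k -> nat) (f : pt p n -> R[i])
         (c eps : R) (alpha alpha' : pt p n -> 'F_p),
    (forall x, `|f x| <= 1) ->
    0 < c -> 0 < eps ->
    multilinear alpha -> multilinear alpha' ->
    c%:C <= bias (fun x => alpha x - alpha' x) ->
    spec_ml eps f alpha ->
    spec_ml (eps * powR p%:R (- (C1 * powR (ln c^-1 / ln p%:R) C2))) f alpha'.
Proof.
exists 1, 1; do 2!split=> //.
move=> p p_prime n f c eps alpha alpha' _ c_gt0 _ ml_alpha ml_alpha' c_le_b [_ eps_le].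
split=> //; set b := bias _ in c_le_b.
set g := fun x => f x * omega_pow R (alpha x) in eps_le.
have b_ge0 : 0 <= b by apply: le_trans c_le_b; rewrite ler0c ltW.
have c_le_Reb : c <= complex.Re b by move: c_le_b; rewrite lecE => /andP[].
have c_le1 : c <= 1.
  by rewrite -lecR (le_trans c_le_b) // -(ger0_norm b_ge0) norm_bias_le1.
have bias_gamma : bias (fun x => alpha' x - alpha x) = b.
  by rewrite bias_subC // -/b -(RRe_real (ger0_real b_ge0)) conjc_real.
have twist : (fun x => g x * omega_pow R (alpha' x - alpha x)) =
             (fun x => f x * omega_pow R (alpha' x)).
  by apply: funext => x; rewrite -mulrA -omega_powD // addrC subrK.
have B_ge0 : 0 <= box_pow g by apply: box_pow_ge0.
have ReB_ge0 : 0 <= complex.Re (box_pow g) by rewrite -ler0c RRe_real ?ger0_real.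
have := bias_box_pow_le p_prime g (multilinearB ml_alpha' ml_alpha).
rewrite bias_gamma twist => /(ler_Re_mul b_ge0 B_ge0) bB_le.
have L_ge0 : 0 <= ln c^-1 / ln p%:R.
  by rewrite divr_ge0 ?ln_ge0 ?invf_ge1 // ler1n prime_gt0.
rewrite /box_norm mul1r powRr1 // powR_ln_ratio ?ltr1n ?prime_gt1 //.
apply: ler_powR_scale eps_le _ => //.
- by rewrite invr_ge0 exprn_ge0 // invf_le1 ?exprn_gt0 // exprn_ege1 // ler1n.
- by rewrite c_gt0 c_le1.
- exact: le_trans (ler_wpM2r ReB_ge0 c_le_Reb) bB_le.
Qed.
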